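(* Let $G$ be an abelian group, $n\ge1$, and $X$ a metric compactum with $\dim_G X\le n$. Let $A\subset X$ be a carrier of a nonzero element of $\check{H}^n(X;G)$ and let $f:X\to X$ be a map homotopic to the identity of $X$. Then $A\subset f(A)$.
   Context: $\check{H}^k(\,\cdot\,;G)$ is reduced Čech cohomology; $\dim_G$ is cohomological dimension. For closed $A\subset X$, $i_A:A\hookrightarrow X$ is the inclusion. A closed nonempty set $A\subset X$ is a (cohomological) carrier of a nonzero $\alpha\in\check{H}^n(X;G)$ if $i_A^*(\alpha)\neq0$ and $i_B^*(\alpha)=0$ for every proper closed subset $B\subsetneq A$. *)

From HB Require Import structures.
From mathcomp Require Import all_boot all_order all_algebra.
From mathcomp Require Import all_classical all_reals all_analysis.
Set Implicit Arguments. Unset Strict Implicit. Unset Printing Implicit Defensive.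
Import Order.TTheory GRing.Theory Num.Theory.
Local Open Scope classical_set_scope.
Local Open Scope ring_scope.

Section Cech.
Variables (T : topologicalType) (G : zmodType).

(* A finite open cover of the subset S of T, indexed by 'I_m, by open
   subsets of T (their traces on S give all finite open covers of S). *)
Definition open_cover_of (S : set T) (m : nat) (U : 'I_m -> set T) : Prop :=
  (forall i, open (U i)) /\ S `<=` \bigcup_i U i.

Definition nerve_simplex (S : set T) (m : nat) (U : 'I_m -> set T)
  (s : seq 'I_m) : Prop :=
  exists x, S x /\ forall i, i \in s -> U i x.

(* G-valued ordered cochains on index sequences; the degree is given by the
   length of the sequence (a p-cochain is evaluated on sequences of size p+1). *)
Definition cochain (m : nat) := seq 'I_m -> G.

Definition face (m : nat) (i : nat) (s : seq 'I_m) : seq 'I_m :=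
  take i s ++ drop i.+1 s.

Definition coboundary (m : nat) (c : cochain m) : cochain m :=
  fun s => \sum_(i < size s) (if odd i then - c (face i s) else c (face i s)).

Definition is_cocycle (S : set T) (m : nat) (U : 'I_m -> set T) (p : nat)
  (c : cochain m) : Prop :=
  forall s, size s = p.+2 -> nerve_simplex S U s -> coboundary c s = 0.

Definition is_coboundary (S : set T) (m : nat) (U : 'I_m -> set T) (p : nat)
  (c : cochain m) : Prop :=
  exists b : cochain m, forall s, size s = p.+1 -> nerve_simplex S U s ->
    c s = coboundary b s.

Definition refines_via (S : set T) (m m' : nat) (V : 'I_m' -> set T)
  (U : 'I_m -> set T) (lam : 'I_m' -> 'I_m) : Prop :=
  forall j, S `&` V j `<=` U (lam j).

(* The image of the Čech class [c] (c a p-cocycle of the nerve of a cover U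
   of T) in Ȟ^p(S;G) (S closed; this is i_S^* [c] = 0) is zero: after passing to some finite
   open cover of S refining U|S, the pulled-back cocycle is a coboundary.  *)
Definition restr_class_zero (S : set T) (m : nat) (U : 'I_m -> set T)
  (p : nat) (c : cochain m) : Prop :=
  exists (m' : nat) (V : 'I_m' -> set T) (lam : 'I_m' -> 'I_m),
    open_cover_of S V /\ refines_via S V U lam /\
    is_coboundary S V p (fun s => c (map lam s)).

(* A Čech class of Ȟ^p(T;G), represented by a cover and a cocycle. *)
Definition cech_class (m : nat) (U : 'I_m -> set T) (p : nat) (c : cochain m)
  : Prop := open_cover_of setT U /\ is_cocycle setT U p c.

Definition carrier (m : nat) (U : 'I_m -> set T) (p : nat) (c : cochain m)
  (A : set T) : Prop :=
  closed A /\ A !=set0 /\ ~ restr_class_zero A U p c /\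
  forall B : set T, closed B -> B `<` A -> restr_class_zero B U p c.

(* Relative Čech cohomology Ȟ^(n+1)(T, A; G) vanishes: every relative
   (n+1)-cocycle (vanishing on the nerve of U|A) becomes, on some refinement,
   the coboundary of a relative n-cochain. *)
Definition rel_cech_vanishes (A : set T) (p : nat) : Prop :=
  forall (m : nat) (U : 'I_m -> set T) (c : cochain m),
    open_cover_of setT U -> is_cocycle setT U p c ->
    (forall s, size s = p.+1 -> nerve_simplex A U s -> c s = 0) ->
    exists (m' : nat) (V : 'I_m' -> set T) (lam : 'I_m' -> 'I_m),
      open_cover_of setT V /\ refines_via setT V U lam /\
      exists b : cochain m',
        (forall s, size s = p -> nerve_simplex A V s -> b s = 0) /\
        forall s, size s = p.+1 -> nerve_simplex setT V s ->
          c (map lam s) = coboundary b s.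

(* dim_G T <= n :  Ȟ^(n+1)(T, A; G) = 0 for every closed A. *)
Definition cohom_dim_le (n : nat) : Prop :=
  forall A : set T, closed A -> rel_cech_vanishes A n.+1.

End Cech.

(* Suppose a point a of A is not in Z := f(A).  Then A `&` Z is a proper closed
   subset of A, so the class alpha vanishes on it.  Gluing a cochain witnessing
   this with alpha near A, and using that Ȟ^(n+1)(X, A ∪ Z; G) = 0, we obtain a
   global cocycle d vanishing near Z whose restriction to A represents alpha|A.
   Cutting the homotopy H into short time steps, consecutive stages induce
   contiguous maps of nerves, whose pullbacks of d differ by a coboundary (the
   prism operator).  At time 0 the pullback to A vanishes since f(A) = Z, so
   d|A, and hence alpha|A, is zero: A does not carry alpha. *)

From HB Require Import structures.
From mathcomp Require Import all_boot all_order all_algebra.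
From mathcomp Require Import all_classical all_reals all_analysis finmap.
Set Implicit Arguments. Unset Strict Implicit. Unset Printing Implicit Defensive.
Import Order.TTheory GRing.Theory Num.Theory.
Local Open Scope classical_set_scope.
Local Open Scope ring_scope.

Section Cochains.
Variable G : zmodType.

Lemma coboundary_nil m (c : cochain G m) : coboundary c [::] = 0.
Proof. by rewrite /coboundary big_ord0. Qed.

Lemma coboundary_cons m (c : cochain G m) a s :
  coboundary c (a :: s) = c s - coboundary (fun t => c (a :: t)) s.
Proof.
rewrite /coboundary big_ord_recl /= /face /= drop0 -sumrN; congr (_ + _).
apply: eq_bigr => i _ /=; rewrite /bump /= add0n add1n /=.
by case: (odd i) => /=; rewrite ?opprK.
Qed.

Lemma eq_coboundary m (c1 c2 : cochain G m) s :
  (forall i, (i < size s)%N -> c1 (face i s) = c2 (face i s)) ->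
  coboundary c1 s = coboundary c2 s.
Proof. by move=> e12; apply: eq_bigr => i _; rewrite e12. Qed.

Lemma coboundaryB m (c1 c2 : cochain G m) s :
  coboundary (fun t => c1 t - c2 t) s = coboundary c1 s - coboundary c2 s.
Proof.
rewrite /coboundary -sumrB; apply: eq_bigr => i _.
by case: (odd i); rewrite ?opprB ?opprD ?opprK // addrC.
Qed.

Lemma coboundaryD m (c1 c2 : cochain G m) s :
  coboundary (fun t => c1 t + c2 t) s = coboundary c1 s + coboundary c2 s.
Proof.
rewrite /coboundary -big_split; apply: eq_bigr => i _.
by case: (odd i); rewrite ?opprD.
Qed.

Lemma coboundary0 m s : coboundary (fun _ : seq 'I_m => 0 : G) s = 0.
Proof. by rewrite /coboundary big1 // => i _; case: (odd i); rewrite ?oppr0. Qed.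

Lemma coboundary_map m m' (g : 'I_m' -> 'I_m) (c : cochain G m) s :
  coboundary (fun t => c (map g t)) s = coboundary c (map g s).
Proof.
elim: s c => [|a s IHs] c; first by rewrite !coboundary_nil.
by rewrite /= !coboundary_cons (IHs (fun t => c (g a :: t))).
Qed.

Lemma coboundaryK m (c : cochain G m) s : coboundary (coboundary c) s = 0.
Proof.
elim: s c => [|a s IHs] c; first exact: coboundary_nil.
rewrite coboundary_cons.
have -> : (fun t => coboundary c (a :: t)) =
          (fun t => c t - coboundary (fun u => c (a :: u)) t).
  by apply: funext => t; rewrite coboundary_cons.
by rewrite coboundaryB IHs subr0 subrr.
Qed.

(* Unfolded: [prism g h d [:: a_0; ...; a_p] =
   \sum_i (-1)^i d [:: g a_0; ...; g a_i; h a_i; ...; h a_p]]. *)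
Fixpoint prism m m' (g h : 'I_m' -> 'I_m) (d : cochain G m) (s : seq 'I_m') : G :=
  if s is a :: s' then
    d (g a :: h a :: map h s') - prism g h (fun t => d (g a :: t)) s'
  else 0.

Lemma prismB m m' (g h : 'I_m' -> 'I_m) (d1 d2 : cochain G m) s :
  prism g h (fun t => d1 t - d2 t) s = prism g h d1 s - prism g h d2 s.
Proof.
elim: s d1 d2 => [|a s IHs] d1 d2 /=; first by rewrite subr0.
rewrite (IHs (fun t => d1 (g a :: t)) (fun t => d2 (g a :: t))).
by rewrite !opprB addrACA [RHS]addrACA [X in _ + X = _]addrC.
Qed.

Let prism_cons_arith (p q y u v D R : G) : R + q = y - v ->
  p - (y - D - R) + (u - D - (p - q)) = u - v.
Proof.
move=> e; rewrite addrC opprB !addrA subrK opprB addrA -[u - D + q + R]addrA.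
by rewrite [q + R]addrC e addrAC opprB !addrA !subrK.
Qed.

Lemma coboundary_prism m m' (g h : 'I_m' -> 'I_m) (d : cochain G m) s :
  coboundary (prism g h d) s + prism g h (coboundary d) s =
  d (map h s) - d (map g s).
Proof.
elim: s d => [|a s IHs] d; first by rewrite coboundary_nil /= add0r subrr.
set da := fun t => d (g a :: t).
have cobP : coboundary (prism g h d) (a :: s) = prism g h d s
    - (da (map h s) - coboundary da (h a :: map h s) - coboundary (prism g h da) s).
  rewrite coboundary_cons /= coboundaryB.
  rewrite (coboundary_map h (fun u => d (g a :: h a :: u))).
  by rewrite [coboundary da _]coboundary_cons subKr.
have prismP : prism g h (coboundary d) (a :: s) = d (h a :: map h s)
    - coboundary da (h a :: map h s) - (prism g h d s - prism g h (coboundary da) s).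
  rewrite /= [coboundary d _]coboundary_cons -prismB.
  by congr (_ - prism _ _ _ _); apply: funext => t; rewrite coboundary_cons.
by rewrite cobP prismP; apply: prism_cons_arith; rewrite IHs.
Qed.

Lemma mem_face m i (s : seq 'I_m) x : x \in face i s -> x \in s.
Proof. by rewrite /face mem_cat => /orP [/mem_take|/mem_drop]. Qed.

Lemma size_face m i (s : seq 'I_m) :
  (i < size s)%N -> size (face i s) = (size s).-1.
Proof.
move=> ltis; rewrite /face size_cat size_take size_drop ltis.
by move: ltis; case: (size s) => // k ltis; rewrite subSS subnKC.
Qed.

Lemma prism_eq0 m m' (g h : 'I_m' -> 'I_m) (d : cochain G m) s :
  (forall t, size t = (size s).+1 -> {subset t <= map g s ++ map h s} -> d t = 0) ->
  prism g h d s = 0.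
Proof.
elim: s d => [|a s IHs] d d0 //=.
rewrite d0 ?IHs ?subr0 //= ?size_map // => [t st sub|y].
  apply: d0; first by rewrite /= st.
  move=> y; rewrite inE => /orP [/eqP ->|/sub]; first exact: mem_head.
  by rewrite !mem_cat /= !in_cons => /orP [] ->; rewrite ?orbT.
by rewrite !in_cons mem_cat /= !in_cons => /or3P [] ->; rewrite ?orbT.
Qed.

End Cochains.

Lemma contiguous_pullbacks_cohomologous (T : topologicalType) (G : zmodType)
    (S : set T) m m' (V : 'I_m -> set T) (W : 'I_m' -> set T)
    (g h : 'I_m' -> 'I_m) (p : nat) (d : cochain G m) :
  is_cocycle setT V p d ->
  (forall s, nerve_simplex S W s ->
     exists y, forall j, j \in s -> V (g j) y /\ V (h j) y) ->
  forall s, size s = p.+1 -> nerve_simplex S W s ->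
    d (map h s) - d (map g s) = coboundary (prism g h d) s.
Proof.
move=> dcoc contig s sp /contig [y gh_y].
rewrite -coboundary_prism prism_eq0 ?addr0 // => t st sub.
apply: dcoc; first by rewrite st sp.
exists y; split => // i /sub; rewrite mem_cat.
by case/orP => /mapP [j /gh_y [gj hj] ->].
Qed.

(* [compact_cover] is only stated for pointed spaces; [pointed_at x] is [T]
   pointed at [x]. *)
Definition pointed_at (T : topologicalType) (x : T) : Type := T.
HB.instance Definition _ (T : topologicalType) (x : T) :=
  Topological.copy (pointed_at x) T.
HB.instance Definition _ (T : topologicalType) (x : T) :=
  isPointed.Build (pointed_at x) x.

Lemma compact_finite_subset_cover (T : topologicalType) (A : set T)
    (I : choiceType) (D : set I) (F : I -> set T) :
  compact A -> (forall i, D i -> open (F i)) -> A `<=` cover D F ->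
  finite_subset_cover D F A.
Proof.
move=> cA Fop; have [[x0 Ax0]|/set0P/negP/negPn/eqP->] := pselect (A !=set0).
  by move: (cA : @compact (pointed_at x0) A); rewrite compact_cover; apply.
by move=> _; exists fset0.
Qed.

Section Metric.
Variables (R : realType) (T : pseudoMetricType R).

Lemma lebesgue_number (S : set T) (I : Type) (K : I -> set T) :
  compact S ->
  (forall p, S p -> exists2 e, 0 < e & exists i, ball p e `<=` K i) ->
  exists2 d, 0 < d & forall q, S q -> exists i, ball q d `<=` K i.
Proof.
move=> cS SK.
have [e eP] : {e : T -> R &
    forall p, S p -> 0 < e p /\ exists i, ball p (e p) `<=` K i}.
  apply: (@choice _ _ (fun p r => S p -> 0 < r /\ exists i, ball p r `<=` K i)).
  move=> p; have [Sp|nSp] := pselect (S p); last by exists 1; move/nSp.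
  by have [r r0 Kr] := SK p Sp; exists r.
have [|q Sq|D DS Scov] := @compact_finite_subset_cover T S T S
    (fun p => (ball p (e p / 2))°) cS; first by move=> p _; exact: open_interior.
  exists q => //; apply: nbhsx_ballx.
  by rewrite divr_gt0 //; case: (eP q Sq).
exists (\big[Order.min/1]_(p <- D) (e p / 2)).
  rewrite big_seq; elim/big_rec: _ => // p x /DS; rewrite in_setE => Sp x0.
  by rewrite lt_min x0 andbT divr_gt0 //; case: (eP p Sp).
move=> q /Scov [p /= Dp /interior_subset bpq].
have /eP [_ [i Ki]] : S p by have := DS _ Dp; rewrite in_setE.
exists i => y qy; apply: Ki.
apply: le_ball (ball_triangle bpq qy).
by rewrite [leRHS](splitr (e p)) lerD2l; exact: ge_bigmin_seq.
Qed.

Lemma compact_finite_net (S : set T) (d : R) : compact S -> 0 < d ->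
  exists D : seq T, forall q, S q -> exists2 p, p \in D & ball p d q.
Proof.
move=> cS d0.
have [|q Sq|D _ Scov] := @compact_finite_subset_cover T S T S
  (fun p => (ball p d)°) cS; first by move=> p _; exact: open_interior.
  by exists q => //; apply: nbhsx_ballx.
by exists D => q /Scov [p /= Dp /interior_subset bpq]; exists p.
Qed.

End Metric.

Section Homotopy.
Import numFieldNormedType.Exports.
Variables (R : realType) (X : metricType R).

Lemma homotopy_subdivision m (V : 'I_m -> set X) (H : X * R -> X) :
  compact [set: X] -> open_cover_of setT V ->
  {within [set: X] `*` `[0, 1], continuous H} ->
  exists m' (W : 'I_m' -> set X) (k : nat) (lam : nat -> 'I_m' -> 'I_m),
    [/\ (0 < k)%N, open_cover_of setT W &
      forall i j x t, (i < k)%N -> W j x -> 0 <= t <= 1 ->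
        i%:R / k%:R <= t <= i.+1%:R / k%:R -> V (lam i j) (H (x, t))].
Proof.
move=> cX [Vop Vcov] Hcont.
pose S := [set: X] `*` `[0, 1] : set (X * R).
pose K r := [set q | S q -> V r (H q)].
have [d d0 dK] : exists2 d, 0 < d & forall q, S q -> exists r, ball q d `<=` K r.
  apply: lebesgue_number; first by apply: compact_setX => //; exact: segment_compact.
  move=> q Sq; have [r _ Vr] := Vcov (H q) I.
  have /((subspace_continuousP _ H).1 Hcont q Sq) : nbhs (H q) (V r).
    exact: open_nbhs_nbhs.
  by move=> /nbhs_ballP [e e0 eV]; exists e => //; exists r => y /eV.
have [D Dnet] := compact_finite_net cX (divr_gt0 d0 (ltr0n _ 2)).
have [k0] := ltr_add_invr d0; rewrite add0r; set k := k0.+1 => kd.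
pose center (j : 'I_(size D)) := tnth (in_tuple D) j.
have [lam lamK] : {lam : nat * 'I_(size D) -> 'I_m & forall ij, (ij.1 <= k)%N ->
    ball ((center ij.2, ij.1%:R / k%:R) : X * R) d `<=` K (lam ij)}.
  apply: (@choice _ _ (fun ij r => (ij.1 <= k)%N ->
    ball ((center ij.2, ij.1%:R / k%:R) : X * R) d `<=` K r)) => -[i j] /=.
  have [ik|_] := boolP (i <= k)%N; last by have [r _ _] := Vcov (center j) I; exists r.
  have /dK [r Kr] : S (center j, i%:R / k%:R).
    split => //=; rewrite in_itv /= divr_ge0 ?ler0n //=.
    by rewrite ler_pdivrMr ?ltr0n // mul1r ler_nat.
  by exists r.
exists (size D), (fun j => (ball (center j) d)°), k, (fun i j => lam (i, j)).
split => //; first split => [j|x _]; first exact: open_interior.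
  have [p pD bpx] := Dnet x I.
  have pi : (index p D < size D)%N by rewrite index_mem.
  exists (Ordinal pi) => //; rewrite /center (tnth_nth p) /= nth_index //.
  apply/nbhs_ballP; exists (d / 2) => [|y xy]; first exact: divr_gt0.
  by have := ball_triangle bpx xy; rewrite -splitr.
move=> i j x t ik /interior_subset Wx /andP [t0 t1] /andP [it ti].
apply: (lamK (i, j) (ltnW ik) (x, t)); last by split => //=; rewrite in_itv /= t0 t1.
split => //=.
rewrite /ball /= distrC ger0_norm ?subr_ge0 //.
apply: le_lt_trans kd; rewrite lerBlDl.
by rewrite -[X in _ + X]mul1r -mulrDl natr1.
Qed.

Lemma homotopy_pullback_coboundary (G : zmodType) (p m : nat)
    (V : 'I_m -> set X) (d : cochain G m) (A Z : set X) (H : X * R -> X) :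
  compact [set: X] -> open_cover_of setT V -> is_cocycle setT V p d ->
  (forall s, size s = p.+1 -> nerve_simplex Z V s -> d s = 0) ->
  {within [set: X] `*` `[0, 1], continuous H} ->
  (forall x, A x -> Z (H (x, 0))) -> (forall x, H (x, 1) = x) ->
  exists m' (W : 'I_m' -> set X) (L : 'I_m' -> 'I_m) (beta : cochain G m'),
    [/\ open_cover_of setT W, forall j, W j `<=` V (L j) &
      forall s, size s = p.+1 -> nerve_simplex A W s ->
        d (map L s) = coboundary beta s].
Proof.
move=> cX Vcov dcoc dZ Hcont HAZ H1.
have [m' [W [k [lam [k0 Wcov WV]]]]] := homotopy_subdivision cX Vcov Hcont.
have k0R : (0 : R) < k%:R by rewrite ltr0n.
have W0 j x : W j x -> V (lam 0%N j) (H (x, 0)).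
  move=> Wjx; apply: WV => //; first by rewrite lexx ler01.
  by rewrite mul0r lexx /= divr_ge0 ?ler0n.
have Wk j x : W j x -> V (lam k.-1 j) x.
  move=> Wjx; rewrite -[x in V _ x]H1; apply: WV; rewrite ?prednK ?lexx ?ler01 //.
  by rewrite divff ?gt_eqF // lexx andbT ler_pdivrMr // mul1r ler_nat leq_pred.
have contig i : (i.+1 < k)%N -> forall s, nerve_simplex A W s ->
    exists y, forall j, j \in s -> V (lam i j) y /\ V (lam i.+1 j) y.
  move=> ik s [x [_ sx]]; exists (H (x, i.+1%:R / k%:R)) => j /sx Wjx.
  have t01 : 0 <= (i.+1%:R / k%:R : R) <= 1.
    by rewrite divr_ge0 ?ler0n //= ler_pdivrMr // mul1r ler_nat ltnW.
  split; apply: WV => //; rewrite ?(ltnW ik) ?lexx ?andbT //=.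
    by rewrite ler_pM2r ?invr_gt0 // ler_nat.
  by rewrite ler_pM2r ?invr_gt0 // ler_nat.
have tel i : (i < k)%N -> exists beta : cochain G m', forall s, size s = p.+1 ->
    nerve_simplex A W s -> d (map (lam i) s) = coboundary beta s.
  elim: i => [_|i IHi ik].
    exists (fun _ => 0) => s sp [x [Ax sx]]; rewrite coboundary0 dZ ?size_map //.
    by exists (H (x, 0)); split; [exact: HAZ | move=> r /mapP [j /sx /W0 Vr ->]].
  have [beta betaE] := IHi (ltnW ik).
  exists (fun s => beta s + prism (lam i) (lam i.+1) d s) => s sp As.
  rewrite coboundaryD -betaE // -(contiguous_pullbacks_cohomologous dcoc (contig i ik)) //.
  by rewrite addrC subrK.
have [beta betaE] := tel k.-1 (etrans (ltn_predL k) k0).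
by exists m', W, (lam k.-1), beta; split => // j x /Wk.
Qed.

End Homotopy.

Section Shrink.
Variables (R : realType) (X : metricType R).

Definition shrink (B V : set X) : set X :=
  [set x | exists b e, [/\ B b, 0 < e, ball b (e + e) `<=` V & ball b e x]]°.

Lemma open_shrink B V : open (shrink B V).
Proof. exact: open_interior. Qed.

Lemma shrink_mem B V b : B b -> open V -> V b -> shrink B V b.
Proof.
move=> Bb Vop Vb; have /nbhs_ballP [e e0 eV] : nbhs b V by exact: open_nbhs_nbhs.
apply/nbhs_ballP; exists (e / 2) => [|y by_]; first exact: divr_gt0.
by exists b, (e / 2); split; rewrite -?splitr ?divr_gt0.
Qed.

(* Among the balls [ball b_j e_j] witnessing [x \in shrink B (V j)], take one
   of least radius [e]: its centre is within [e + e_j <= 2 e_j] of every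
   [b_j], hence lies in every [V j]. *)
Lemma shrink_common_point m (B : set X) (V : 'I_m -> set X) x (s : seq 'I_m) :
  s != [::] -> (forall j, j \in s -> shrink B (V j) x) ->
  exists2 b, B b & forall j, j \in s -> V j b.
Proof.
case: s => // a s _ xV.
suff [b [e [Bb bx small]]] : exists b e, [/\ B b, ball b e x & forall j, j \in a :: s ->
    exists bj ej, [/\ e <= ej, ball bj ej x & ball bj (ej + ej) `<=` V j]].
  exists b => // j /small [bj [ej [eej bjx bjV]]]; apply: bjV.
  by apply: le_ball (ball_triangle bjx (ball_sym bx)); rewrite lerD2l.
elim: s a xV => [|c s IHs] a xV.
  have /interior_subset [b [e [Bb e0 bV bx]]] := xV a (mem_head _ _).
  by exists b, e; split => // j; rewrite inE => /eqP ->; exists b, e.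
have /interior_subset [ba [ea [Bba ea0 baV bax]]] := xV a (mem_head _ _).
have [b [e [Bb bx small]]] := IHs c (fun j js => xV j (@mem_behead _ [:: a, c & s] j js)).
have [le_ea_e|lt_e_ea] := leP ea e.
  exists ba, ea; split => // j; rewrite in_cons => /orP [/eqP ->|/small].
    by exists ba, ea.
  by move=> [bj [ej [eej bjx bjV]]]; exists bj, ej; split => //; exact: le_trans eej.
exists b, e; split => // j; rewrite in_cons => /orP [/eqP ->|/small //].
by exists ba, ea; split => //; exact: ltW.
Qed.

End Shrink.

Section Glue.
Variables (R : realType) (X : metricType R) (G : zmodType) (n m : nat)
  (U : 'I_m -> set X) (c : cochain G m) (A Z : set X)
  (m1 : nat) (V : 'I_m1 -> set X) (lam : 'I_m1 -> 'I_m) (b : cochain G m1).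
Hypothesis U_cover : open_cover_of setT U.
Hypothesis A_closed : closed A.
Hypothesis Z_closed : closed Z.
Hypothesis V_cover : open_cover_of (A `&` Z) V.
Hypothesis V_refines : refines_via (A `&` Z) V U lam.
Hypothesis cE : forall s, size s = n.+1 -> nerve_simplex (A `&` Z) V s ->
  c (map lam s) = coboundary b s.

(* The glued cover of [X] has three blocks of indices: shrunken [V j] near
   [A `&` Z], then [U i `\` Z], then [U i `\` A]. *)
Local Notation N := (m1 + (m + m))%N.

Definition core (j : 'I_m1) : 'I_N := lshift (m + m) j.

Definition core_of (k : 'I_N) : option 'I_m1 :=
  if fintype.split k is inl j then Some j else None.

Definition glued_cover (k : 'I_N) : set X :=
  match fintype.split k with
  | inl j => shrink (A `&` Z) (V j) `&` U (lam j)
  | inr r => match fintype.split r with inl i => U i `\` Z | inr i => U i `\` A end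
  end.

Definition glued_proj (k : 'I_N) : 'I_m :=
  match fintype.split k with
  | inl j => lam j
  | inr r => match fintype.split r with inl i => i | inr i => i end
  end.

Lemma coreK : pcancel core core_of.
Proof. by move=> j; rewrite /core_of /core -/(unsplit (inl j)) unsplitK. Qed.

Lemma core_ofK : ocancel core_of core.
Proof.
by move=> k; rewrite /core_of /core; case E: (fintype.split k) => //=; rewrite -(splitK k) E.
Qed.

Lemma glued_proj_core j : glued_proj (core j) = lam j.
Proof. by rewrite /glued_proj /core -/(unsplit (inl j)) unsplitK. Qed.

Lemma glued_cover_core j : glued_cover (core j) = shrink (A `&` Z) (V j) `&` U (lam j).
Proof. by rewrite /glued_cover /core -/(unsplit (inl j)) unsplitK. Qed.

Lemma glued_cover_proj k : glued_cover k `<=` U (glued_proj k).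
Proof.
rewrite /glued_cover /glued_proj; case: (fintype.split k) => [j x []//|r].
by case: (fintype.split r) => i x [].
Qed.

Lemma glued_cover_AZ k x z : A x -> Z z -> glued_cover k x -> glued_cover k z ->
  isSome (core_of k).
Proof.
rewrite /glued_cover /core_of; case: (fintype.split k) => // r Ax Zz.
by case: (fintype.split r) => i [_ nAx] [_ nZz].
Qed.

Lemma glued_cover_covers : open_cover_of setT glued_cover.
Proof.
have [Uop Ucov] := U_cover.
split=> [k|x _].
  rewrite /glued_cover; case: (fintype.split k) => [j|r].
    exact/openI/Uop/open_shrink.
  by case: (fintype.split r) => i; rewrite setDE; apply/openI/closed_openC.
have [i _ Uix] := Ucov x I.
have [Zx|nZx] := pselect (Z x); last first.
  exists (rshift m1 (lshift m i)) => //; rewrite /glued_cover.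
  by rewrite -/(unsplit (inr _)) unsplitK -/(unsplit (inl i)) unsplitK.
have [Ax|nAx] := pselect (A x); last first.
  exists (rshift m1 (rshift m i)) => //; rewrite /glued_cover.
  by rewrite -/(unsplit (inr _)) unsplitK -/(unsplit (inr i)) unsplitK.
have [j _ Vjx] := V_cover.2 x (conj Ax Zx).
exists (core j) => //; rewrite glued_cover_core; split; last exact: V_refines.
exact: shrink_mem (V_cover.1 j) Vjx.
Qed.

Definition core_cochain (s : seq 'I_N) : G :=
  if all (fun k => isSome (core_of k)) s then b (pmap core_of s) else 0.

Lemma core_cochain_core w : core_cochain (map core w) = b w.
Proof.
rewrite /core_cochain all_map.
have -> : all (preim core (fun k => isSome (core_of k))) w.
  by apply/allP => j _ /=; rewrite coreK.
by rewrite (map_pK coreK).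
Qed.

Lemma all_coreP s : all (fun k => isSome (core_of k)) s ->
  s = map core (pmap core_of s).
Proof. by rewrite (pmap_filter core_ofK) => /all_filterP. Qed.

Definition glued_cochain (s : seq 'I_N) : G :=
  if pselect (nerve_simplex A glued_cover s)
  then c (map glued_proj s) - coboundary core_cochain s else 0.

Lemma glued_cochainE s : nerve_simplex A glued_cover s ->
  glued_cochain s = c (map glued_proj s) - coboundary core_cochain s.
Proof. by rewrite /glued_cochain; case: pselect. Qed.

(* A simplex meeting both [A] and [Z] only uses shrunken sets, which then have
   a common point in [A `&` Z], where [c] is the coboundary of [b]. *)
Lemma glued_cochain_eq0 s : size s = n.+1 -> nerve_simplex Z glued_cover s ->
  glued_cochain s = 0.
Proof.
move=> sn [z [Zz sz]]; rewrite /glued_cochain; case: pselect => // -[x [Ax sx]].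
have score : all (fun k => isSome (core_of k)) s.
  by apply/allP => k ks; exact: (glued_cover_AZ Ax Zz (sx k ks) (sz k ks)).
move: sn sx; rewrite (all_coreP score); set w := pmap core_of s => wn wx.
have shrink_wx j : j \in w -> shrink (A `&` Z) (V j) x.
  by move=> jw; have /wx := map_f core jw; rewrite glued_cover_core => -[].
rewrite -coboundary_map (eq_coboundary (c2 := b)) => [|i _]; last first.
  by rewrite core_cochain_core.
rewrite -map_comp (eq_map glued_proj_core) cE ?subrr //; first by rewrite -wn size_map.
have [|y AZy wy] := shrink_common_point _ shrink_wx.
  by rewrite -size_eq0 -(size_map core) wn.
by exists y.
Qed.

Hypothesis c_cocycle : is_cocycle setT U n c.

Lemma glued_cochain_cocycle t : size t = n.+2 ->
  nerve_simplex (A `|` Z) glued_cover t -> coboundary glued_cochain t = 0.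
Proof.
move=> tn [y [AZy ty]].
have [[x [Ax tx]]|nA] := pselect (nerve_simplex A glued_cover t).
  rewrite (eq_coboundary (c2 := fun s => c (map glued_proj s) - coboundary core_cochain s));
    last by move=> i _; apply: glued_cochainE; exists x; split => // k /mem_face /tx.
  rewrite coboundaryB coboundaryK subr0 coboundary_map.
  apply: c_cocycle; first by rewrite size_map.
  by exists x; split => // i /mapP [k /tx /glued_cover_proj Ui ->].
have Zy : Z y by case: AZy => // Ay; case: nA; exists y.
rewrite (eq_coboundary (c2 := fun _ => 0)) ?coboundary0 // => i it.
apply: glued_cochain_eq0; first by rewrite size_face // tn.
by exists y; split => // k /mem_face /ty.
Qed.

End Glue.

Lemma restriction_extends_by_zero (R : realType) (X : metricType R)
    (G : zmodType) (n m : nat) (U : 'I_m -> set X) (c : cochain G m) (A Z : set X) :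
  closed A -> closed Z -> cohom_dim_le X G n -> cech_class U n c ->
  restr_class_zero (A `&` Z) U n c ->
  exists m' (V : 'I_m' -> set X) (mu : 'I_m' -> 'I_m) (d e : cochain G m'),
    [/\ open_cover_of setT V, refines_via A V U mu, is_cocycle setT V n d,
      forall s, size s = n.+1 -> nerve_simplex Z V s -> d s = 0 &
      forall s, size s = n.+1 -> nerve_simplex A V s ->
        c (map mu s) = d s + coboundary e s].
Proof.
move=> Acl Zcl dimX [Ucov ccoc] [m1 [V [lam [Vcov [Vref [b cE]]]]]].
pose E := glued_cochain U c A Z V lam b.
have [s _ _|s sn AZs|m' [W [nu [Wcov [Wref [e [e0 Ee]]]]]]] :=
  dimX _ (closedU Acl Zcl) _ _ (coboundary E) (glued_cover_covers Ucov Acl Zcl Vcov Vref).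
- exact: coboundaryK.
- exact: (glued_cochain_cocycle cE ccoc sn AZs).
have EA s : nerve_simplex A W s -> E (map nu s) =
    c (map (glued_proj lam \o nu) s) - coboundary (core_cochain b) (map nu s).
  move=> [x [Ax sx]]; rewrite map_comp /E glued_cochainE //.
  by exists x; split => // k /mapP [j /sx Wjx ->]; exact: Wref.
exists m', W, (glued_proj lam \o nu), (fun s => E (map nu s) - e s),
  (fun s => core_cochain b (map nu s)); split => //.
- by move=> j x [_ Wjx]; apply: glued_cover_proj; apply: Wref.
- by move=> s sn Ws; rewrite coboundaryB coboundary_map Ee // subrr.
- move=> s sn [z [Zz sz]]; rewrite e0 //; last by exists z; split => //; right.
  rewrite /E (glued_cochain_eq0 cE) ?subrr ?size_map //.
  by exists z; split => // k /mapP [j /sz Wjz ->]; exact: Wref.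
- move=> s sn As; rewrite EA // e0 //; last first.
    by case: As => x [Ax sx]; exists x; split => //; left.
  by rewrite subr0 coboundary_map subrK.
Qed.

Unset Implicit Arguments.

Theorem proposition2p3 (R : realType) (X : metricType R) (G : zmodType)
  (n : nat) (hn : (1 <= n)%N)
  (hcomp : compact [set: X])
  (hdim : cohom_dim_le X G n)
  (m : nat) (U : 'I_m -> set X) (c : cochain G m)
  (halpha : cech_class U n c)
  (hnz : ~ restr_class_zero [set: X] U n c)
  (A : set X) (hA : carrier U n c A)
  (f : X -> X) (hf : continuous f)
  (H : X * R -> X)
  (hH : {within [set: X] `*` `[0, 1], continuous H})
  (hH0 : forall x, H (x, 0) = f x)
  (hH1 : forall x, H (x, 1) = x) :
  A `<=` f @` A.
Proof.
move=> a Aa; apply: contrapT => fAa.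
have [Acl [_ [c_not0 c_proper0]]] := hA.
have fAcl : closed (f @` A).
  apply: compact_closed; first exact: metric_hausdorff.
  apply: continuous_compact; first exact: continuous_subspaceT.
  exact: subclosed_compact Acl hcomp (@subsetT _ A).
have [|m' [V [mu [d [e [Vcov Vref dcoc dfA cE]]]]]] :=
  restriction_extends_by_zero Acl fAcl hdim halpha.
  by apply: c_proper0; [exact: closedI | split=> [x []//|/(_ a Aa) [_ /fAa]]].
have H0_fA x : A x -> (f @` A) (H (x, 0)) by rewrite hH0; exists x.
have [m'' [W [L [beta [[Wop Wcover] WV betaE]]]]] :=
  homotopy_pullback_coboundary hcomp Vcov dcoc dfA hH H0_fA hH1.
apply: c_not0; exists m'', W, (mu \o L); split; first by split=> // x _; exact: Wcover.
split=> [j x [Ax Wjx]|]; first by apply: Vref; split => //; exact: WV.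
exists (fun s => beta s + e (map L s)) => s sn [x [Ax sx]].
rewrite coboundaryD coboundary_map -betaE //; last by exists x.
rewrite map_comp cE ?size_map //.
by exists x; split => // i /mapP [j /sx /WV Vi ->].
Qed.
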